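(* Consider the control system $\dot x=f(d,x)+g(x)u$, $x\in\mathbb{R}^n$, $u\in U\subseteq\mathbb{R}$, $d\in D$, with $D\subseteq\mathbb{R}^l$ compact, $f,g$ continuous, $f(d,0)=0$ for all $d\in D$, satisfying (H) and one of (P1), (P2), (P3). Suppose that $V_1,\dots,V_k\in C^1(\mathbb{R}^n;\mathbb{R}_+)$ is a VRCLF for this system, with associated data $\eta,W,\delta,K,\gamma_{i,j},\rho,\varepsilon$ (and $A,\kappa,\nu$ in property (vi)). Then there exist functions $\tilde\gamma_{i,j}\in\mathcal{N}_1$, $i,j=1,\dots,k$, with $\tilde\gamma_{i,i}\equiv0$, such that for $i\ne j$ each $\tilde\gamma_{i,j}$ is positive definite and satisfies $\lim_{s\to+\infty}\tilde\gamma_{i,j}(s)=+\infty$, and such that all properties of the definition of the VRCLF (for the same case (P1), (P2) or (P3)) hold with $\tilde\gamma_{i,j}$ in place of $\gamma_{i,j}$ (and the same remaining data).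
   Context: Notation: $\mathbb{R}_+=[0,+\infty)$. A function $\gamma:\mathbb{R}_+\to\mathbb{R}_+$ is of class $\mathcal{N}_1$ if it is continuous, non-decreasing and $\gamma(0)=0$; of class $\mathcal{K}_\infty$ if it is continuous, increasing, $\gamma(0)=0$ and $\gamma(s)\to+\infty$ as $s\to+\infty$. A function $\rho:\mathbb{R}_+\to\mathbb{R}_+$ is positive definite if $\rho(0)=0$ and $\rho(s)>0$ for $s>0$. A continuous $W:\mathbb{R}^n\to\mathbb{R}$ is radially unbounded if for every $M>0$ the set $\{x: W(x)\le M\}$ is compact or empty. For a $C^1$ function $V:\mathbb{R}^n\to\mathbb{R}$, $\nabla V(x)$ denotes its (row) gradient, $L_gV(x):=\nabla V(x)g(x)$ and $\max_{d\in D}L_fV(x):=\max_{d\in D}\nabla V(x)f(d,x)$. Hypothesis (H): there exists a symmetric positive definite matrix $P\in\mathbb{R}^{n\times n}$ such that for every bounded $S\subset\mathbb{R}^n\times\mathbb{R}$ there is $L\ge0$ with $(x-y)'P\big(f(d,x)+g(x)u-f(d,y)-g(y)u\big)\le L|x-y|^2$ for all $(x,u),(y,u)\in S$ and all $d\in D$. Control sets: (P1) $U=\mathbb{R}$; (P2) $U=[-a,+\infty)$ for some constant $a\ge0$; (P3) $U=[-a,b]$ for some constants $a,b\ge0$. Small-gain conditions for functions $\gamma_{i,j}$, $i,j=1,\dots,k$: for each $r=2,\dots,k$ and all pairwise distinct $i_1,\dots,i_r\in\{1,\dots,k\}$, $(\gamma_{i_1,i_2}\circ\gamma_{i_2,i_3}\circ\cdots\circ\gamma_{i_r,i_1})(s)<s$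 for all $s>0$. Definition (VRCLF). Under (H),(P1), a family $V_1,\dots,V_k\in C^1(\mathbb{R}^n;\mathbb{R}_+)$ is a VRCLF if there exist $\eta\in C^1(\mathbb{R}^n;\mathbb{R})$ with $\eta(0)<0$, a radially unbounded $W\in C^1(\mathbb{R}^n;[1,+\infty))$, $\delta\in C^0(\mathbb{R}_+;(0,+\infty))$, a non-decreasing $K\in C^0(\mathbb{R}_+;[1,+\infty))$, functions $\gamma_{i,j}\in\mathcal{N}_1$ ($i,j=1,\dots,k$) with $\gamma_{i,i}\equiv0$, a continuous positive definite $\rho:\mathbb{R}_+\to\mathbb{R}_+$ and a constant $\varepsilon>0$ such that: (i) there exist $a_1,a_2\in\mathcal{K}_\infty$ with $a_1(|x|)\le\max_{i}V_i(x)\le a_2(|x|)$ for all $x\in\mathbb{R}^n$; (ii) for all $x$ with $\eta(x)\le\varepsilon$ and all $i,j$: if $\max_{s}\gamma_{i,s}(V_s(x))\le V_i(x)$ and $L_gV_i(x)=0$, then $\max_{d\in D}L_fV_i(x)+\rho(V_i(x))\le0$; if $\max_s\gamma_{i,s}(V_s(x))\le V_i(x)$, $\max_s\gamma_{j,s}(V_s(x))\le V_j(x)$ and $L_gV_i(x)L_gV_j(x)<0$, then $\max_{d}L_fV_i(x)+\rho(V_i(x))\le\frac{L_gV_i(x)}{L_gV_j(x)}\big(\max_dL_fV_j(x)+\rho(V_j(x))\big)$; (iii) for all $x$ with $\eta(x)\ge0$: if $L_g\eta(x)=0$ then $\max_dL_f\eta(x)+\delta(\eta(x))\le0$; if $L_gW(x)=0$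 then $\max_dL_fW(x)-K(\eta(x))W(x)\le0$; if $L_g\eta(x)L_gW(x)<0$ then $\max_dL_f\eta(x)+\delta(\eta(x))\le\frac{L_g\eta(x)}{L_gW(x)}\big(\max_dL_fW(x)-K(\eta(x))W(x)\big)$; (iv) for all $x$ with $0\le\eta(x)\le\varepsilon$ and all $j$: if $\max_s\gamma_{j,s}(V_s(x))\le V_j(x)$ and $L_g\eta(x)L_gV_j(x)<0$ then $\max_dL_f\eta(x)+\delta(\eta(x))\le\frac{L_g\eta(x)}{L_gV_j(x)}\big(\max_dL_fV_j(x)+\rho(V_j(x))\big)$; if $\max_s\gamma_{j,s}(V_s(x))\le V_j(x)$ and $L_gW(x)L_gV_j(x)<0$ then $\max_dL_fW(x)-K(\eta(x))W(x)\le\frac{L_gW(x)}{L_gV_j(x)}\big(\max_dL_fV_j(x)+\rho(V_j(x))\big)$; (v) the functions $\gamma_{i,j}$ satisfy the small-gain conditions; (vi) there exist an open set $A\subseteq\mathbb{R}^n$ with $0\in A$ and a locally Lipschitz $\kappa\in C^{\nu}(A;U)$, $\nu\in\{0,1,2,\dots\}\cup\{\infty\}$, with $\kappa(0)=0$, such that for all $i$ and all $x\in A$ with $\max_j\gamma_{i,j}(V_j(x))\le V_i(x)$: $\max_dL_fV_i(x)+L_gV_i(x)\kappa(x)\le-\rho(V_i(x))$. Under (H),(P2) a VRCLF must satisfy (i)–(vi) and also (vii): for all $x$ and $i$: if $\max_s\gamma_{i,s}(V_s(x))\le V_i(x)$, $\eta(x)\le\varepsilon$ and $L_gV_i(x)>0$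 then $\max_dL_fV_i(x)+\rho(V_i(x))-aL_gV_i(x)<0$; if $\eta(x)\ge0$ and $L_g\eta(x)>0$ then $\max_dL_f\eta(x)+\delta(\eta(x))-aL_g\eta(x)<0$; if $\eta(x)\ge0$ and $L_gW(x)>0$ then $\max_dL_fW(x)-K(\eta(x))W(x)-aL_gW(x)<0$. Under (H),(P3) a VRCLF must satisfy (i)–(vii) and also (viii): for all $x$ and $i$: if $\max_s\gamma_{i,s}(V_s(x))\le V_i(x)$, $\eta(x)\le\varepsilon$ and $L_gV_i(x)<0$ then $\max_dL_fV_i(x)+\rho(V_i(x))+bL_gV_i(x)<0$; if $\eta(x)\ge0$ and $L_g\eta(x)<0$ then $\max_dL_f\eta(x)+\delta(\eta(x))+bL_g\eta(x)<0$; if $\eta(x)\ge0$ and $L_gW(x)<0$ then $\max_dL_fW(x)-K(\eta(x))W(x)+bL_gW(x)<0$. *)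

From Stdlib Require Import Reals List ClassicalEpsilon.
From Stdlib Require Vectors.Fin.
Open Scope R_scope.

Definition Rn (n : nat) := Fin.t n -> R.

Fixpoint fsum (n : nat) : (Fin.t n -> R) -> R :=
  match n return (Fin.t n -> R) -> R with
  | O => fun _ => 0
  | S m => fun v => v Fin.F1 + fsum m (fun i => v (Fin.FS i))
  end.

(* maximum over a finite index set; the empty max is 0 (only used on
   nonnegative quantities, where this agrees with the usual max for k >= 1) *)
Fixpoint fmax (n : nat) : (Fin.t n -> R) -> R :=
  match n return (Fin.t n -> R) -> R with
  | O => fun _ => 0
  | S m => fun v => Rmax (v Fin.F1) (fmax m (fun i => v (Fin.FS i)))
  end.

Definition vzero {n} : Rn n := fun _ => 0.
Definition vsub {n} (x y : Rn n) : Rn n := fun i => x i - y i.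
Definition dot {n} (x y : Rn n) : R := fsum n (fun i => x i * y i).
Definition norm {n} (x : Rn n) : R := sqrt (dot x x).

Definition qform {n} (P : Fin.t n -> Fin.t n -> R) (x y : Rn n) : R :=
  fsum n (fun i => x i * fsum n (fun j => P i j * y j)).

Definition bounded_set {n} (S : Rn n -> Prop) : Prop :=
  exists M, forall x, S x -> norm x <= M.
Definition closed_set {n} (S : Rn n -> Prop) : Prop :=
  forall x, (forall e, 0 < e -> exists y, S y /\ norm (vsub y x) < e) -> S x.
(* Heine-Borel *)
Definition compact_set {n} (S : Rn n -> Prop) : Prop :=
  closed_set S /\ bounded_set S.
Definition open_set {n} (A : Rn n -> Prop) : Prop :=
  forall x, A x -> exists r, 0 < r /\ forall y, norm (vsub y x) < r -> A y.

Definition cont_on {n} (A : Rn n -> Prop) (h : Rn n -> R) : Prop :=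
  forall x, A x -> forall e, 0 < e -> exists dl, 0 < dl /\
    forall y, A y -> norm (vsub y x) < dl -> Rabs (h y - h x) < e.
Definition vcont {n m} (F : Rn n -> Rn m) : Prop :=
  forall x e, 0 < e -> exists dl, 0 < dl /\
    forall y, norm (vsub y x) < dl -> norm (vsub (F y) (F x)) < e.

Definition grad_at {n} (h : Rn n -> R) (v : Rn n) (x : Rn n) : Prop :=
  forall e, 0 < e -> exists dl, 0 < dl /\ forall y, norm (vsub y x) < dl ->
    Rabs (h y - h x - dot v (vsub y x)) <= e * norm (vsub y x).

Definition C1 {n} (h : Rn n -> R) (Dh : Rn n -> Rn n) : Prop :=
  (forall x, grad_at h (Dh x) x) /\ vcont Dh.

Fixpoint Ck_on {n} (m : nat) (A : Rn n -> Prop) (h : Rn n -> R) : Prop :=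
  match m with
  | O => cont_on A h
  | S m' => exists Dh : Rn n -> Rn n,
      (forall x, A x -> grad_at h (Dh x) x) /\
      forall i, Ck_on m' A (fun x => Dh x i)
  end.
Definition Cnu_on {n} (nu : option nat) (A : Rn n -> Prop) (h : Rn n -> R) : Prop :=
  match nu with
  | Some m => Ck_on m A h
  | None => forall m, Ck_on m A h
  end.

Definition loc_lipschitz_on {n} (A : Rn n -> Prop) (h : Rn n -> R) : Prop :=
  forall x, A x -> exists r L, 0 < r /\ 0 <= L /\
    forall y z, A y -> A z -> norm (vsub y x) < r -> norm (vsub z x) < r ->
      Rabs (h y - h z) <= L * norm (vsub y z).

(** * Scalar function classes on R_+ (functions R -> R, only [0,+oo) matters) *)
Definition cont_Rplus (h : R -> R) : Prop :=
  forall s, 0 <= s -> forall e, 0 < e -> exists dl, 0 < dl /\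
    forall t, 0 <= t -> Rabs (t - s) < dl -> Rabs (h t - h s) < e.
Definition tends_infty (h : R -> R) : Prop :=
  forall M, exists s0, forall s, s0 <= s -> M <= h s.

Definition class_N1 (h : R -> R) : Prop :=
  (forall s, 0 <= s -> 0 <= h s) /\ cont_Rplus h /\
  (forall s t, 0 <= s -> s <= t -> h s <= h t) /\ h 0 = 0.
Definition class_Kinf (h : R -> R) : Prop :=
  (forall s, 0 <= s -> 0 <= h s) /\ cont_Rplus h /\
  (forall s t, 0 <= s -> s < t -> h s < h t) /\ h 0 = 0 /\ tends_infty h.
Definition posdef_fun (h : R -> R) : Prop :=
  h 0 = 0 /\ forall s, 0 < s -> 0 < h s.

Definition is_max {l} (D : Rn l -> Prop) (h : Rn l -> R) (m : R) : Prop :=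
  (exists d, D d /\ h d = m) /\ forall d, D d -> h d <= m.

Definition maxD {l} (D : Rn l -> Prop) (h : Rn l -> R) : R :=
  match excluded_middle_informative (exists m, is_max D h m) with
  | left e => proj1_sig (constructive_indefinite_description _ e)
  | right _ => 0
  end.

Definition f_cont {l n} (D : Rn l -> Prop) (f : Rn l -> Rn n -> Rn n) : Prop :=
  forall d x, D d -> forall e, 0 < e -> exists dl, 0 < dl /\
    forall d' x', D d' -> norm (vsub d' d) < dl -> norm (vsub x' x) < dl ->
      norm (vsub (f d' x') (f d x)) < e.

Definition hypH {l n} (D : Rn l -> Prop) (f : Rn l -> Rn n -> Rn n)
    (g : Rn n -> Rn n) : Prop :=
  exists P : Fin.t n -> Fin.t n -> R,
    (forall i j, P i j = P j i) /\
    (forall x, x <> vzero -> 0 < qform P x x) /\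
    forall S : Rn n -> R -> Prop,
      (exists M, forall x u, S x u -> norm x + Rabs u <= M) ->
      exists L, 0 <= L /\
        forall x y u d, S x u -> S y u -> D d ->
          qform P (vsub x y)
            (fun q => f d x q + g x q * u - f d y q - g y q * u)
          <= L * (norm (vsub x y)) ^ 2.

Inductive ctrl_case : Type :=
| CaseP1
| CaseP2 (a : R)
| CaseP3 (a b : R).

Definition case_ok (c : ctrl_case) : Prop :=
  match c with
  | CaseP1 => True
  | CaseP2 a => 0 <= a
  | CaseP3 a b => 0 <= a /\ 0 <= b
  end.

Definition U_of (c : ctrl_case) (u : R) : Prop :=
  match c with
  | CaseP1 => True
  | CaseP2 a => - a <= u
  | CaseP3 a b => - a <= u /\ u <= b
  end.

Definition Lg {n} (g : Rn n -> Rn n) (DF : Rn n -> Rn n) (x : Rn n) : R :=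
  dot (DF x) (g x).
Definition MLf {l n} (D : Rn l -> Prop) (f : Rn l -> Rn n -> Rn n)
    (DF : Rn n -> Rn n) (x : Rn n) : R :=
  maxD D (fun d => dot (DF x) (f d x)).

(* chain gam i0 [i1;...;ir] s = gam i1 i2 (gam i2 i3 (... gam ir i0 s)) *)
Fixpoint chain {k} (gam : Fin.t k -> Fin.t k -> R -> R) (i0 : Fin.t k)
    (l : list (Fin.t k)) (s : R) : R :=
  match l with
  | nil => s
  | i :: nil => gam i i0 s
  | i :: ((j :: _) as t) => gam i j (chain gam i0 t s)
  end.
Definition cycle_comp {k} (gam : Fin.t k -> Fin.t k -> R -> R)
    (l : list (Fin.t k)) (s : R) : R :=
  match l with
  | nil => s
  | i1 :: _ => chain gam i1 l s
  end.
Definition small_gain {k} (gam : Fin.t k -> Fin.t k -> R -> R) : Prop :=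
  forall l : list (Fin.t k), NoDup l -> (2 <= length l)%nat ->
    forall s, 0 < s -> cycle_comp gam l s < s.

Section VRCLF.
Context {l n k : nat} (D : Rn l -> Prop) (f : Rn l -> Rn n -> Rn n)
  (g : Rn n -> Rn n) (c : ctrl_case)
  (V : Fin.t k -> Rn n -> R) (DV : Fin.t k -> Rn n -> Rn n)
  (eta : Rn n -> R) (Deta : Rn n -> Rn n)
  (W : Rn n -> R) (DW : Rn n -> Rn n)
  (delta K : R -> R) (gam : Fin.t k -> Fin.t k -> R -> R) (rho : R -> R)
  (eps : R) (A : Rn n -> Prop) (kappa : Rn n -> R) (nu : option nat).

Definition active (i : Fin.t k) (x : Rn n) : Prop :=
  fmax k (fun s => gam i s (V s x)) <= V i x.

Definition VRCLF_data_ok : Prop :=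
  (forall i, C1 (V i) (DV i)) /\ (forall i x, 0 <= V i x) /\
  C1 eta Deta /\ eta vzero < 0 /\
  C1 W DW /\ (forall x, 1 <= W x) /\
  (forall M, 0 < M -> compact_set (fun x => W x <= M)) /\
  cont_Rplus delta /\ (forall s, 0 <= s -> 0 < delta s) /\
  cont_Rplus K /\ (forall s t, 0 <= s -> s <= t -> K s <= K t) /\
  (forall s, 0 <= s -> 1 <= K s) /\
  (forall i j, class_N1 (gam i j)) /\ (forall i s, 0 <= s -> gam i i s = 0) /\
  cont_Rplus rho /\ (forall s, 0 <= s -> 0 <= rho s) /\ posdef_fun rho /\
  0 < eps.

Definition prop_i : Prop :=
  exists a1 a2, class_Kinf a1 /\ class_Kinf a2 /\
    forall x, a1 (norm x) <= fmax k (fun i => V i x) /\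
              fmax k (fun i => V i x) <= a2 (norm x).

Definition prop_ii : Prop :=
  forall x, eta x <= eps -> forall i j,
    (active i x -> Lg g (DV i) x = 0 ->
       MLf D f (DV i) x + rho (V i x) <= 0) /\
    (active i x -> active j x -> Lg g (DV i) x * Lg g (DV j) x < 0 ->
       MLf D f (DV i) x + rho (V i x) <=
       Lg g (DV i) x / Lg g (DV j) x * (MLf D f (DV j) x + rho (V j x))).

Definition prop_iii : Prop :=
  forall x, 0 <= eta x ->
    (Lg g Deta x = 0 -> MLf D f Deta x + delta (eta x) <= 0) /\
    (Lg g DW x = 0 -> MLf D f DW x - K (eta x) * W x <= 0) /\
    (Lg g Deta x * Lg g DW x < 0 ->
       MLf D f Deta x + delta (eta x) <=
       Lg g Deta x / Lg g DW x * (MLf D f DW x - K (eta x) * W x)).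

Definition prop_iv : Prop :=
  forall x, 0 <= eta x -> eta x <= eps -> forall j,
    (active j x -> Lg g Deta x * Lg g (DV j) x < 0 ->
       MLf D f Deta x + delta (eta x) <=
       Lg g Deta x / Lg g (DV j) x * (MLf D f (DV j) x + rho (V j x))) /\
    (active j x -> Lg g DW x * Lg g (DV j) x < 0 ->
       MLf D f DW x - K (eta x) * W x <=
       Lg g DW x / Lg g (DV j) x * (MLf D f (DV j) x + rho (V j x))).

Definition prop_v : Prop := small_gain gam.

Definition prop_vi : Prop :=
  open_set A /\ A vzero /\ loc_lipschitz_on A kappa /\ Cnu_on nu A kappa /\
  (forall x, A x -> U_of c (kappa x)) /\ kappa vzero = 0 /\
  forall i x, A x -> active i x ->
    MLf D f (DV i) x + Lg g (DV i) x * kappa x <= - rho (V i x).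

Definition prop_vii (a : R) : Prop :=
  (forall x i, active i x -> eta x <= eps -> 0 < Lg g (DV i) x ->
     MLf D f (DV i) x + rho (V i x) - a * Lg g (DV i) x < 0) /\
  (forall x, 0 <= eta x -> 0 < Lg g Deta x ->
     MLf D f Deta x + delta (eta x) - a * Lg g Deta x < 0) /\
  (forall x, 0 <= eta x -> 0 < Lg g DW x ->
     MLf D f DW x - K (eta x) * W x - a * Lg g DW x < 0).

Definition prop_viii (b : R) : Prop :=
  (forall x i, active i x -> eta x <= eps -> Lg g (DV i) x < 0 ->
     MLf D f (DV i) x + rho (V i x) + b * Lg g (DV i) x < 0) /\
  (forall x, 0 <= eta x -> Lg g Deta x < 0 ->
     MLf D f Deta x + delta (eta x) + b * Lg g Deta x < 0) /\
  (forall x, 0 <= eta x -> Lg g DW x < 0 ->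
     MLf D f DW x - K (eta x) * W x + b * Lg g DW x < 0).

Definition VRCLF : Prop :=
  VRCLF_data_ok /\ prop_i /\ prop_ii /\ prop_iii /\ prop_iv /\ prop_v /\
  prop_vi /\
  match c with
  | CaseP1 => True
  | CaseP2 a => prop_vii a
  | CaseP3 a b => prop_vii a /\ prop_viii b
  end.
End VRCLF.

(* Let H(t) = t + sum_{i,j} gam_ij(t), an expanding map of R_+ (continuous,
   strictly increasing, H(0) = 0, H(t) >= t) which bounds every gain, and let phi be the
   inverse of the expanding map T = H^k o H^k o (2 .).  Then phi is continuous,
   nondecreasing, positive definite and unbounded, and gam'_ij = max(gam_ij, phi) for
   i <> j (gam'_ii = gam_ii) has the required shape.  Enlarging the gains only shrinks
   the regions where some V_i is active, so properties (i)-(iv) and (vi)-(viii) persist.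
   For the small-gain condition (v), a cycle of length m <= k composed of the gam'
   is bounded by max(cycle of the gam, H^m(phi(H^m s))), and H^k(phi(H^k s)) < s by
   the choice of T. *)
From Stdlib Require Import Reals List Lra Lia ClassicalEpsilon.
From Stdlib Require Vectors.Fin FinFun.
Open Scope R_scope.

Ltac Rmax_lra := unfold Rmax, Rabs in *; repeat (destruct Rle_dec || destruct Rcase_abs); lra.

Lemma continuity_pt_of_eps (h : R -> R) (s : R) :
  (forall e, 0 < e -> exists dl, 0 < dl /\
     forall t, Rabs (t - s) < dl -> Rabs (h t - h s) < e) ->
  continuity_pt h s.
Proof.
  intros Hc e He. destruct (Hc e He) as [dl [Hdl Ht]].
  exists dl; split; [exact Hdl|]. intros t [_ Hts]. exact (Ht t Hts).
Qed.

Lemma continuity_clamped (h : R -> R) :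
  cont_Rplus h -> continuity (fun t => h (Rmax 0 t)).
Proof.
  intros Hc s. apply continuity_pt_of_eps. intros e He.
  destruct (Hc (Rmax 0 s) (Rmax_l 0 s) e He) as [dl [Hdl Ht]].
  exists dl; split; [exact Hdl|].
  intros t Hts. apply Ht; [apply Rmax_l|]. revert Hts; Rmax_lra.
Qed.

Lemma continuity_fsum (m : nat) (F : Fin.t m -> R -> R) :
  (forall i, continuity (F i)) -> continuity (fun t => fsum m (fun i => F i t)).
Proof.
  revert F; induction m as [|m IH]; intros F HF; simpl.
  - apply continuity_const. intros x y; reflexivity.
  - apply (continuity_plus (F Fin.F1) (fun t => fsum m (fun i => F (Fin.FS i) t))); auto.
Qed.

Lemma fsum_zero (m : nat) (v : Fin.t m -> R) : (forall i, v i = 0) -> fsum m v = 0.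
Proof.
  revert v; induction m as [|m IH]; intros v Hv; simpl; [reflexivity|].
  rewrite Hv, IH by auto. lra.
Qed.

Lemma fsum_le (m : nat) (v w : Fin.t m -> R) :
  (forall i, v i <= w i) -> fsum m v <= fsum m w.
Proof.
  revert v w; induction m as [|m IH]; intros v w Hvw; simpl; [lra|].
  specialize (IH (fun i => v (Fin.FS i)) (fun i => w (Fin.FS i)) (fun i => Hvw _)).
  specialize (Hvw Fin.F1). lra.
Qed.

Lemma fsum_nonneg (m : nat) (v : Fin.t m -> R) : (forall i, 0 <= v i) -> 0 <= fsum m v.
Proof.
  intros Hv. rewrite <- (fsum_zero m (fun _ => 0)) by auto. apply fsum_le; exact Hv.
Qed.

Lemma fsum_ge_term (m : nat) (v : Fin.t m -> R) :
  (forall i, 0 <= v i) -> forall i0, v i0 <= fsum m v.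
Proof.
  revert v; induction m as [|m IH]; intros v Hv i0.
  - exact (Fin.case0 (fun _ => _) i0).
  - simpl. apply (Fin.caseS' i0).
    + assert (0 <= fsum m (fun i => v (Fin.FS i))) by (apply fsum_nonneg; auto). lra.
    + intros p. specialize (IH (fun i => v (Fin.FS i)) (fun i => Hv _) p).
      specialize (Hv Fin.F1). simpl in IH. lra.
Qed.

Lemma fmax_le (m : nat) (v w : Fin.t m -> R) :
  (forall i, v i <= w i) -> fmax m v <= fmax m w.
Proof.
  revert v w; induction m as [|m IH]; intros v w Hvw; simpl; [lra|].
  specialize (IH (fun i => v (Fin.FS i)) (fun i => w (Fin.FS i)) (fun i => Hvw _)).
  specialize (Hvw Fin.F1). revert IH Hvw. Rmax_lra.
Qed.

Lemma NoDup_Fin_length (k : nat) (l : list (Fin.t k)) : NoDup l -> (length l <= k)%nat.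
Proof.
  intros Hl.
  assert (Hm : NoDup (map (fun i => proj1_sig (Fin.to_nat i)) l)).
  { apply FinFun.Injective_map_NoDup; [|exact Hl].
    intros a b Hab. apply Fin.to_nat_inj; exact Hab. }
  apply NoDup_incl_length with (l' := seq 0 k) in Hm.
  - rewrite length_map, length_seq in Hm; exact Hm.
  - intros x Hx. apply in_map_iff in Hx. destruct Hx as [i [<- _]].
    apply in_seq. destruct (Fin.to_nat i); simpl; lia.
Qed.

Definition nondecr (h : R -> R) : Prop := forall s t, 0 <= s -> s <= t -> h s <= h t.

Lemma class_N1_nondecr (h : R -> R) : class_N1 h -> nondecr h.
Proof. intros (_ & _ & Hmono & _). exact Hmono. Qed.

Lemma nondecr_le_Rmax (h : R -> R) (x a b : R) :
  nondecr h -> 0 <= x -> 0 <= a -> 0 <= b -> x <= Rmax a b -> h x <= Rmax (h a) (h b).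
Proof.
  intros Hh Hx Ha Hb Hxab. unfold Rmax in Hxab |- *.
  destruct (Rle_dec a b); destruct (Rle_dec (h a) (h b)).
  - apply Hh; assumption.
  - apply Rle_trans with (h b); [apply Hh; assumption | lra].
  - apply Rle_trans with (h a); [apply Hh; assumption | lra].
  - apply Hh; assumption.
Qed.

Definition expanding (H : R -> R) : Prop :=
  continuity H /\ H 0 = 0 /\ (forall t, 0 <= t -> t <= H t) /\
  (forall s t, 0 <= s -> s < t -> H s < H t).

Section Expanding.
Variable H : R -> R.
Hypothesis HH : expanding H.

Lemma expanding_ge (t : R) : 0 <= t -> t <= H t.
Proof. apply HH. Qed.

Lemma expanding_nonneg (t : R) : 0 <= t -> 0 <= H t.
Proof. intros Ht. pose proof (expanding_ge t Ht). lra. Qed.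

Lemma expanding_nondecr : nondecr H.
Proof.
  intros s t Hs Hst. destruct (Rle_lt_or_eq_dec _ _ Hst) as [Hlt|<-]; [|lra].
  left; apply HH; assumption.
Qed.

(* Strict monotonicity makes H order-reflecting on R_+. *)
Lemma expanding_lt_reflect (s t : R) : 0 <= s -> 0 <= t -> H s < H t -> s < t.
Proof.
  intros Hs Ht Hlt. destruct (Rlt_or_le s t) as [|Hts]; [assumption|].
  pose proof (expanding_nondecr t s Ht Hts). lra.
Qed.

Lemma expanding_le_reflect (s t : R) : 0 <= s -> 0 <= t -> H s <= H t -> s <= t.
Proof.
  intros Hs Ht Hle. destruct (Rle_or_lt s t) as [|Hts]; [assumption|].
  pose proof (proj2 (proj2 (proj2 HH)) t s Ht Hts). lra.
Qed.

End Expanding.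

Lemma expanding_comp (H1 H2 : R -> R) :
  expanding H1 -> expanding H2 -> expanding (fun t => H1 (H2 t)).
Proof.
  intros HH1 HH2. split; [|split; [|split]].
  - apply (continuity_comp H2 H1); [apply HH2 | apply HH1].
  - rewrite (proj1 (proj2 HH2)). apply HH1.
  - intros t Ht. apply Rle_trans with (H2 t); [apply HH2; exact Ht|].
    apply (expanding_ge H1 HH1), (expanding_nonneg H2 HH2), Ht.
  - intros s t Hs Hst. apply HH1; [apply (expanding_nonneg H2 HH2), Hs|]. apply HH2; assumption.
Qed.

Lemma expanding_iter (H : R -> R) (m : nat) : expanding H -> expanding (Nat.iter m H).
Proof.
  intros HH. induction m as [|m IH].
  - change (expanding (fun t => t)).
    split; [|split; [|split]]; intros; try lra.
    exact (derivable_continuous _ derivable_id).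
  - change (expanding (fun t => H (Nat.iter m H t))).
    exact (expanding_comp H (Nat.iter m H) HH IH).
Qed.

Lemma expanding_double : expanding (fun t => 2 * t).
Proof.
  split; [|split; [|split]]; intros; try lra.
  apply (continuity_scal id 2). exact (derivable_continuous _ derivable_id).
Qed.

Section ExpandingInverse.
Variable T : R -> R.
Hypothesis HT : expanding T.

(* Existence of the inverse, by the intermediate value theorem on [0, t + 1]. *)
Lemma expanding_inverse_exists :
  exists phi : R -> R, forall t, 0 <= phi t /\ T (phi t) = Rmax 0 t.
Proof.
  assert (Hex : forall t, exists u, 0 <= u /\ T u = Rmax 0 t).
  { intros t. set (t' := Rmax 0 t). assert (Ht' : 0 <= t') by apply Rmax_l.
    destruct (Rle_lt_or_eq_dec _ _ Ht') as [Hpos|Hzero].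
    - assert (Hc : continuity (fun u => T u - t')).
      { apply (continuity_minus T (fun _ => t')); [apply HT|].
        apply continuity_const. intros x y; reflexivity. }
      assert (T0 : T 0 = 0) by apply HT.
      assert (T1 : t' + 1 <= T (t' + 1)) by (apply (expanding_ge T HT); lra).
      destruct (IVT _ 0 (t' + 1) Hc ltac:(lra) ltac:(lra) ltac:(lra)) as [z [Hz Hfz]].
      exists z; split; lra.
    - exists 0; split; [lra|]. rewrite <- Hzero. apply HT. }
  exists (fun t => proj1_sig (constructive_indefinite_description _ (Hex t))).
  intros t. exact (proj2_sig (constructive_indefinite_description _ (Hex t))).
Qed.

Variable phi : R -> R.
Hypothesis Hphi : forall t, 0 <= phi t /\ T (phi t) = Rmax 0 t.

Lemma inverse_nonneg (t : R) : 0 <= phi t.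
Proof. apply Hphi. Qed.

Lemma inverse_right (t : R) : 0 <= t -> T (phi t) = t.
Proof. intros Ht. rewrite (proj2 (Hphi t)). apply Rmax_right, Ht. Qed.

Lemma inverse_le_id (t : R) : 0 <= t -> phi t <= t.
Proof.
  intros Ht. rewrite <- (inverse_right t Ht) at 2.
  apply (expanding_ge T HT), inverse_nonneg.
Qed.

Lemma inverse_zero : phi 0 = 0.
Proof. pose proof (inverse_le_id 0 (Rle_refl 0)). pose proof (inverse_nonneg 0). lra. Qed.

Lemma inverse_nondecr : nondecr phi.
Proof.
  intros s t Hs Hst. apply (expanding_le_reflect T HT); try apply inverse_nonneg.
  rewrite !inverse_right by lra. exact Hst.
Qed.

Lemma inverse_pos (t : R) : 0 < t -> 0 < phi t.
Proof.
  intros Ht. apply (expanding_lt_reflect T HT); [lra | apply inverse_nonneg|].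
  rewrite inverse_right, (proj1 (proj2 HT)); lra.
Qed.

Lemma inverse_unbounded : tends_infty phi.
Proof.
  intros M. set (M' := Rmax 0 M). assert (HM' : 0 <= M') by apply Rmax_l.
  exists (T M'). intros s Hs.
  assert (Hs0 : 0 <= s) by (pose proof (expanding_ge T HT M' HM'); lra).
  apply Rle_trans with M'; [apply Rmax_r|].
  apply (expanding_le_reflect T HT); [exact HM' | apply inverse_nonneg|].
  rewrite inverse_right; assumption.
Qed.

(* The two halves of continuity: phi cannot jump up, nor down. *)
Lemma inverse_no_jump_up (s e : R) : 0 <= s -> 0 < e ->
  exists d, 0 < d /\ forall t, 0 <= t -> t - s < d -> phi t < phi s + e.
Proof.
  intros Hs He. exists (T (phi s + e) - s). split.
  - rewrite <- (inverse_right s Hs) at 2.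
    pose proof (inverse_nonneg s). pose proof (proj2 (proj2 (proj2 HT)) (phi s) (phi s + e)).
    lra.
  - intros t Ht Hts. apply (expanding_lt_reflect T HT); [apply inverse_nonneg | pose proof (inverse_nonneg s); lra |].
    rewrite inverse_right by exact Ht. lra.
Qed.

Lemma inverse_no_jump_down (s e : R) : 0 <= s -> 0 < e ->
  exists d, 0 < d /\ forall t, 0 <= t -> s - t < d -> phi s - e < phi t.
Proof.
  intros Hs He. destruct (Rlt_or_le (phi s) e) as [Hsmall|Hlarge].
  - exists 1; split; [lra|]. intros t _ _. pose proof (inverse_nonneg t). lra.
  - exists (s - T (phi s - e)). split.
    + rewrite <- (inverse_right s Hs) at 1.
      pose proof (proj2 (proj2 (proj2 HT)) (phi s - e) (phi s)). lra.
    + intros t Ht Hst. apply (expanding_lt_reflect T HT); [lra | apply inverse_nonneg |].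
      rewrite inverse_right by exact Ht. lra.
Qed.

Lemma inverse_continuous : cont_Rplus phi.
Proof.
  intros s Hs e He.
  destruct (inverse_no_jump_up s e Hs He) as [d1 [Hd1 Hup]].
  destruct (inverse_no_jump_down s e Hs He) as [d2 [Hd2 Hdown]].
  exists (Rmin d1 d2); split; [apply Rmin_pos; assumption|].
  intros t Ht Hts. pose proof (Rmin_l d1 d2). pose proof (Rmin_r d1 d2).
  assert (Hab := Rabs_def2 _ _ Hts).
  pose proof (Hup t Ht ltac:(lra)). pose proof (Hdown t Ht ltac:(lra)).
  apply Rabs_def1; lra.
Qed.

Lemma inverse_class_N1 : class_N1 phi.
Proof.
  split; [intros; apply inverse_nonneg|].
  split; [exact inverse_continuous|]. split; [exact inverse_nondecr | exact inverse_zero].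
Qed.

End ExpandingInverse.

Definition gain_bound {k : nat} (gam : Fin.t k -> Fin.t k -> R -> R) (t : R) : R :=
  Rmax 0 t + fsum k (fun i => fsum k (fun j => gam i j (Rmax 0 t))).

Section GainBound.
Variables (k : nat) (gam : Fin.t k -> Fin.t k -> R -> R).
Hypothesis Hgam : forall i j, class_N1 (gam i j).

Lemma gain_bound_expanding : expanding (gain_bound gam).
Proof.
  assert (Hsum : forall s, 0 <= s -> 0 <= fsum k (fun i => fsum k (fun j => gam i j s))).
  { intros s Hs. apply fsum_nonneg; intro i; apply fsum_nonneg; intro j. apply Hgam, Hs. }
  unfold gain_bound. split; [|split; [|split]].
  - apply (continuity_plus (fun t => Rmax 0 t)
             (fun t => fsum k (fun i => fsum k (fun j => gam i j (Rmax 0 t))))).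
    + apply (continuity_clamped (fun t => t)). intros s _ e He.
      exists e; split; [exact He|]. intros t _ Hts; exact Hts.
    + apply (continuity_fsum k (fun i t => fsum k (fun j => gam i j (Rmax 0 t)))). intro i.
      apply (continuity_fsum k (fun j t => gam i j (Rmax 0 t))). intro j.
      apply continuity_clamped, Hgam.
  - rewrite Rmax_left by lra. rewrite fsum_zero; [lra|].
    intro i. apply fsum_zero. intro j. apply Hgam.
  - intros t Ht. rewrite Rmax_right by exact Ht. pose proof (Hsum t Ht). lra.
  - intros s t Hs Hst. rewrite !Rmax_right by lra.
    assert (fsum k (fun i => fsum k (fun j => gam i j s))
            <= fsum k (fun i => fsum k (fun j => gam i j t))); [|lra].
    apply fsum_le; intro i; apply fsum_le; intro j. apply Hgam; lra.
Qed.

Lemma gain_bound_dominates (i j : Fin.t k) (s : R) : 0 <= s -> gam i j s <= gain_bound gam s.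
Proof.
  intros Hs. unfold gain_bound. rewrite Rmax_right by exact Hs.
  assert (gam i j s <= fsum k (fun i => fsum k (fun j => gam i j s))); [|lra].
  apply Rle_trans with (fsum k (fun j => gam i j s)).
  - apply (fsum_ge_term k (fun j => gam i j s)). intro; apply Hgam, Hs.
  - apply (fsum_ge_term k (fun i => fsum k (fun j => gam i j s))).
    intro; apply fsum_nonneg; intro; apply Hgam, Hs.
Qed.

End GainBound.

(** The extra contribution of phi after m steps from s is at most
    [phi_margin m s] = H^m(phi(H^m s)), where H bounds all the F_ij. *)
Lemma chain_cons {k : nat} (gam : Fin.t k -> Fin.t k -> R -> R) (i0 i : Fin.t k)
  (t : list (Fin.t k)) (s : R) :
  chain gam i0 (i :: t) s = gam i (hd i0 t) (chain gam i0 t s).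
Proof. destruct t; reflexivity. Qed.

Section ChainBound.
Variables (k : nat) (F G : Fin.t k -> Fin.t k -> R -> R) (H phi : R -> R).
Hypothesis HH : expanding H.
Hypothesis F_bound : forall i j s, 0 <= s -> 0 <= F i j s <= H s.
Hypothesis F_nondecr : forall i j, nondecr (F i j).
Hypothesis G_bound : forall i j s, 0 <= s -> 0 <= G i j s <= Rmax (F i j s) (phi s).
Hypothesis phi_below_id : forall s, 0 <= s -> 0 <= phi s <= s.
Hypothesis phi_nondecr : nondecr phi.

Definition phi_margin (m : nat) (s : R) : R := Nat.iter m H (phi (Nat.iter m H s)).

Lemma iter_nonneg (m : nat) (s : R) : 0 <= s -> 0 <= Nat.iter m H s.
Proof. apply (expanding_nonneg _ (expanding_iter H m HH)). Qed.

Lemma phi_margin_nonneg (m : nat) (s : R) : 0 <= s -> 0 <= phi_margin m s.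
Proof. intros Hs. apply iter_nonneg, phi_below_id, iter_nonneg, Hs. Qed.

Lemma phi_margin_step (m : nat) (s : R) : 0 <= s -> H (phi_margin m s) <= phi_margin (S m) s.
Proof.
  intros Hs. unfold phi_margin. change (Nat.iter (S m) H (phi (Nat.iter m H s))
    <= Nat.iter (S m) H (phi (Nat.iter (S m) H s))).
  apply (expanding_nondecr _ (expanding_iter H (S m) HH));
    [apply phi_below_id, iter_nonneg, Hs|].
  apply phi_nondecr; [apply iter_nonneg, Hs|].
  apply (expanding_ge H HH), iter_nonneg, Hs.
Qed.

Lemma phi_margin_le_count (m m' : nat) (s : R) :
  0 <= s -> (m <= m')%nat -> phi_margin m s <= phi_margin m' s.
Proof.
  intros Hs Hm. induction Hm as [|m' _ IH]; [lra|].
  apply Rle_trans with (H (phi_margin m' s)); [|apply phi_margin_step, Hs].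
  apply Rle_trans with (phi_margin m' s); [exact IH|].
  apply (expanding_ge H HH), phi_margin_nonneg, Hs.
Qed.

Lemma phi_le_margin (m : nat) (s x : R) :
  0 <= x -> x <= Nat.iter m H s -> phi x <= phi_margin m s.
Proof.
  intros Hx Hxs. apply Rle_trans with (phi (Nat.iter m H s)); [apply phi_nondecr; assumption|].
  apply (expanding_ge _ (expanding_iter H m HH)), phi_below_id. lra.
Qed.

Lemma chain_F_bound (i0 : Fin.t k) (l : list (Fin.t k)) (s : R) :
  0 <= s -> 0 <= chain F i0 l s <= Nat.iter (length l) H s.
Proof.
  intros Hs. induction l as [|i t IH]; [simpl; lra|]. rewrite chain_cons. simpl length.
  split; [apply F_bound, IH|].
  apply Rle_trans with (H (chain F i0 t s)); [apply F_bound, IH|].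
  apply (expanding_nondecr H HH); apply IH.
Qed.

Lemma chain_G_bound (i0 : Fin.t k) (l : list (Fin.t k)) (s : R) :
  0 <= s -> 0 <= chain G i0 l s <= Rmax (chain F i0 l s) (phi_margin (length l) s).
Proof.
  intros Hs. induction l as [|i t IH].
  - simpl. split; [lra | apply Rmax_l].
  - rewrite !chain_cons. simpl length. set (j := hd i0 t).
    set (cf := chain F i0 t s) in *. set (cg := chain G i0 t s) in *.
    set (B := phi_margin (length t) s) in *.
    assert (HB : 0 <= B) by (apply phi_margin_nonneg, Hs).
    assert (Hcf : 0 <= cf <= Nat.iter (length t) H s) by (apply chain_F_bound, Hs).
    assert (HBstep : H B <= phi_margin (S (length t)) s) by (apply phi_margin_step, Hs).
    assert (HB_le_HB : B <= H B) by (apply (expanding_ge H HH), HB).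
    assert (Hphi_cf : phi cf <= B) by (apply phi_le_margin; apply Hcf).
    assert (Hphi_B : phi B <= B) by apply phi_below_id, HB.
    assert (HF_cg : F i j cg <= Rmax (F i j cf) (F i j B))
      by (apply nondecr_le_Rmax; try apply IH; try apply Hcf; auto).
    assert (HF_B : F i j B <= H B) by (apply F_bound, HB).
    assert (Hphi_cg : phi cg <= Rmax (phi cf) (phi B))
      by (apply nondecr_le_Rmax; try apply IH; try apply Hcf; auto).
    split; [apply G_bound, IH|].
    pose proof (proj2 (G_bound i j cg (proj1 IH))) as HG_cg. revert HF_cg Hphi_cg HG_cg. Rmax_lra.
Qed.

Lemma small_gain_enlarged :
  (forall s, 0 < s -> phi_margin k s < s) -> small_gain F -> small_gain G.
Proof.
  intros Hmargin HF l Hl Hlen s Hs.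
  specialize (HF l Hl Hlen s Hs).
  destruct l as [|i1 t]; [simpl in Hlen; lia|]. unfold cycle_comp in *.
  pose proof (chain_G_bound i1 (i1 :: t) s ltac:(lra)) as [_ HG].
  pose proof (phi_margin_le_count (length (i1 :: t)) k s ltac:(lra) (NoDup_Fin_length k _ Hl)).
  pose proof (Hmargin s Hs). revert HG. Rmax_lra.
Qed.

End ChainBound.

Lemma inverse_margin_lt (H phi : R -> R) (m : nat) :
  expanding H ->
  (forall t, 0 <= phi t /\ Nat.iter (m + m) H (2 * phi t) = Rmax 0 t) ->
  forall s, 0 < s -> Nat.iter m H (phi (Nat.iter m H s)) < s.
Proof.
  intros HH Hphi s Hs.
  assert (Hm := expanding_iter H m HH).
  assert (Hms : s <= Nat.iter m H s) by (apply (expanding_ge _ Hm); lra).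
  set (v := phi (Nat.iter m H s)).
  assert (Hv : 0 <= v) by apply Hphi.
  assert (Tv : Nat.iter m H (Nat.iter m H (2 * v)) = Nat.iter m H s).
  { rewrite <- Nat.iter_add. unfold v. rewrite (proj2 (Hphi _)). apply Rmax_right. lra. }
  destruct (Rlt_or_le (Nat.iter m H v) s) as [|Hge]; [assumption|]. exfalso.
  assert (Hvpos : 0 < v).
  { destruct (Rle_lt_or_eq_dec _ _ Hv) as [|Hv0]; [assumption|].
    rewrite <- Hv0, Rmult_0_r, !(proj1 (proj2 Hm)) in Tv. lra. }
  assert (Hlt : Nat.iter m H v < Nat.iter m H (2 * v)) by (apply Hm; lra).
  assert (Hlt2 : Nat.iter m H (Nat.iter m H v) < Nat.iter m H (Nat.iter m H (2 * v)))
    by (apply Hm; [apply (expanding_nonneg _ Hm), Hv | exact Hlt]).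
  pose proof (expanding_nondecr _ Hm s (Nat.iter m H v) ltac:(lra) Hge). lra.
Qed.

Definition enlarged_gains {k : nat} (gam : Fin.t k -> Fin.t k -> R -> R) (phi : R -> R)
  (i j : Fin.t k) (s : R) : R :=
  if Fin.eq_dec i j then gam i j s else Rmax (gam i j s) (phi s).

Lemma class_N1_Rmax (h1 h2 : R -> R) :
  class_N1 h1 -> class_N1 h2 -> class_N1 (fun s => Rmax (h1 s) (h2 s)).
Proof.
  intros (P1 & C1 & M1 & Z1) (P2 & C2 & M2 & Z2). split; [|split; [|split]].
  - intros s Hs. apply Rle_trans with (h1 s); [apply P1, Hs | apply Rmax_l].
  - intros s Hs e He.
    destruct (C1 s Hs e He) as [d1 [Hd1 K1]]. destruct (C2 s Hs e He) as [d2 [Hd2 K2]].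
    exists (Rmin d1 d2); split; [apply Rmin_pos; assumption|]. intros t Ht Hts.
    pose proof (K1 t Ht (Rlt_le_trans _ _ _ Hts (Rmin_l d1 d2))) as E1.
    pose proof (K2 t Ht (Rlt_le_trans _ _ _ Hts (Rmin_r d1 d2))) as E2.
    revert E1 E2. Rmax_lra.
  - intros s t Hs Hst. pose proof (M1 s t Hs Hst) as E1. pose proof (M2 s t Hs Hst) as E2.
    revert E1 E2. Rmax_lra.
  - rewrite Z1, Z2. apply Rmax_left; lra.
Qed.

Section EnlargedGains.
Variables (k : nat) (gam : Fin.t k -> Fin.t k -> R -> R) (phi : R -> R).
Hypothesis Hgam : forall i j, class_N1 (gam i j).
Hypothesis Hphi : class_N1 phi.

Lemma enlarged_class_N1 (i j : Fin.t k) : class_N1 (enlarged_gains gam phi i j).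
Proof.
  unfold enlarged_gains. destruct Fin.eq_dec; [apply Hgam|].
  apply class_N1_Rmax; [apply Hgam | exact Hphi].
Qed.

Lemma enlarged_diag (i : Fin.t k) (s : R) : enlarged_gains gam phi i i s = gam i i s.
Proof. unfold enlarged_gains. destruct Fin.eq_dec; [reflexivity | congruence]. Qed.

Lemma enlarged_ge (i j : Fin.t k) (s : R) : gam i j s <= enlarged_gains gam phi i j s.
Proof. unfold enlarged_gains. destruct Fin.eq_dec; [lra | apply Rmax_l]. Qed.

Lemma enlarged_le (i j : Fin.t k) (s : R) :
  0 <= s -> 0 <= enlarged_gains gam phi i j s <= Rmax (gam i j s) (phi s).
Proof.
  intros Hs. split; [apply enlarged_class_N1, Hs|].
  unfold enlarged_gains. destruct Fin.eq_dec; [apply Rmax_l | lra].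
Qed.

Lemma enlarged_offdiag (i j : Fin.t k) :
  i <> j -> posdef_fun phi -> tends_infty phi ->
  posdef_fun (enlarged_gains gam phi i j) /\ tends_infty (enlarged_gains gam phi i j).
Proof.
  intros Hij [Hphi0 Hphipos] Hphiinf. unfold enlarged_gains.
  destruct Fin.eq_dec as [|_]; [contradiction|]. split; [split|].
  - rewrite Hphi0, (proj2 (proj2 (proj2 (Hgam i j)))). apply Rmax_left; lra.
  - intros s Hs. apply Rlt_le_trans with (phi s); [apply Hphipos, Hs | apply Rmax_r].
  - intros M. destruct (Hphiinf M) as [s0 Hs0]. exists s0. intros s Hs.
    apply Rle_trans with (phi s); [apply Hs0, Hs | apply Rmax_r].
Qed.

End EnlargedGains.

(** Larger gains only shrink the set where a V_i is "active", so every property of a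
    VRCLF except the bounds on the gains themselves survives enlarging the gains. *)
Section LargerGains.
Context {l n k : nat} (D : Rn l -> Prop) (f : Rn l -> Rn n -> Rn n)
  (g : Rn n -> Rn n) (c : ctrl_case)
  (V : Fin.t k -> Rn n -> R) (DV : Fin.t k -> Rn n -> Rn n)
  (eta : Rn n -> R) (Deta : Rn n -> Rn n) (W : Rn n -> R) (DW : Rn n -> Rn n)
  (delta K : R -> R) (gam gam' : Fin.t k -> Fin.t k -> R -> R) (rho : R -> R)
  (eps : R) (A : Rn n -> Prop) (kappa : Rn n -> R) (nu : option nat).
Hypothesis gam_le : forall i j s, 0 <= s -> gam i j s <= gam' i j s.

Lemma active_larger_gains (i : Fin.t k) (x : Rn n) :
  (forall j, 0 <= V j x) -> active V gam' i x -> active V gam i x.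
Proof.
  unfold active. intros HV Ha. eapply Rle_trans; [|exact Ha].
  apply fmax_le. intro j. apply gam_le, HV.
Qed.

Lemma VRCLF_larger_gains :
  (forall i j, class_N1 (gam' i j)) -> (forall i s, 0 <= s -> gam' i i s = 0) ->
  small_gain gam' ->
  VRCLF D f g c V DV eta Deta W DW delta K gam rho eps A kappa nu ->
  VRCLF D f g c V DV eta Deta W DW delta K gam' rho eps A kappa nu.
Proof.
  intros HN' Hdiag' HSG' (Hdata & Hi & Hii & Hiii & Hiv & _ & Hvi & Hcase).
  assert (Hact : forall i x, active V gam' i x -> active V gam i x).
  { intros i x. apply active_larger_gains. intro j. apply Hdata. }
  split; [|split; [exact Hi|split; [|split; [exact Hiii|split; [|split; [exact HSG'|split]]]]]].
  - unfold VRCLF_data_ok in *. tauto.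
  - intros x Hx i j. destruct (Hii x Hx i j) as [B1 B2]. split; auto.
  - intros x Hx1 Hx2 j. destruct (Hiv x Hx1 Hx2 j) as [B1 B2]. split; auto.
  - destruct Hvi as (B1 & B2 & B3 & B4 & B5 & B6 & B7). repeat split; auto.
  - destruct c as [|a|a b]; [exact I| |].
    + destruct Hcase as (C1 & C2 & C3). repeat split; auto.
    + destruct Hcase as [(C1 & C2 & C3) (E1 & E2 & E3)]. repeat split; auto.
Qed.

End LargerGains.

Theorem lemma3p6 (l n k : nat) (D : Rn l -> Prop) (f : Rn l -> Rn n -> Rn n)
  (g : Rn n -> Rn n) (c : ctrl_case)
  (V : Fin.t k -> Rn n -> R) (DV : Fin.t k -> Rn n -> Rn n)
  (eta : Rn n -> R) (Deta : Rn n -> Rn n)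
  (W : Rn n -> R) (DW : Rn n -> Rn n)
  (delta K : R -> R) (gam : Fin.t k -> Fin.t k -> R -> R) (rho : R -> R)
  (eps : R) (A : Rn n -> Prop) (kappa : Rn n -> R) (nu : option nat) :
  compact_set D -> (exists d, D d) ->
  f_cont D f -> vcont g -> (forall d, D d -> f d vzero = vzero) ->
  hypH D f g -> case_ok c ->
  VRCLF D f g c V DV eta Deta W DW delta K gam rho eps A kappa nu ->
  exists gam' : Fin.t k -> Fin.t k -> R -> R,
    (forall i j, class_N1 (gam' i j)) /\
    (forall i s, 0 <= s -> gam' i i s = 0) /\
    (forall i j, i <> j -> posdef_fun (gam' i j) /\ tends_infty (gam' i j)) /\
    VRCLF D f g c V DV eta Deta W DW delta K gam' rho eps A kappa nu.
Proof.
  intros _ _ _ _ _ _ _ HV.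
  assert (HN : forall i j, class_N1 (gam i j)) by apply HV.
  assert (Hdiag : forall i s, 0 <= s -> gam i i s = 0) by apply HV.
  (* phi inverts T = H^k o H^k o (2 .), where H bounds all the gains *)
  set (H := gain_bound gam).
  assert (HH : expanding H) by (apply gain_bound_expanding, HN).
  set (T := fun u => Nat.iter (k + k) H (2 * u)).
  assert (HT : expanding T)
    by (apply (expanding_comp (Nat.iter (k + k) H)); [apply expanding_iter, HH | apply expanding_double]).
  destruct (expanding_inverse_exists T HT) as [phi Hphi].
  assert (Hphi_N1 : class_N1 phi) by exact (inverse_class_N1 T HT phi Hphi).
  set (gam' := enlarged_gains gam phi).
  assert (HN' : forall i j, class_N1 (gam' i j)) by exact (enlarged_class_N1 k gam phi HN Hphi_N1).
  assert (Hdiag' : forall i s, 0 <= s -> gam' i i s = 0)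
    by (intros i s Hs; unfold gam'; rewrite enlarged_diag; apply Hdiag, Hs).
  assert (HSG' : small_gain gam').
  { apply (small_gain_enlarged k gam gam' H phi HH).
    - intros i j s Hs. split; [apply HN, Hs | apply gain_bound_dominates; assumption].
    - intros i j. apply class_N1_nondecr, HN.
    - intros i j s Hs. apply enlarged_le; assumption.
    - intros s Hs. split; [apply Hphi | apply (inverse_le_id T HT phi Hphi), Hs].
    - apply class_N1_nondecr, Hphi_N1.
    - apply inverse_margin_lt; [exact HH | exact Hphi].
    - apply HV. }
  exists gam'. split; [exact HN'|]. split; [exact Hdiag'|]. split.
  - intros i j Hij. apply enlarged_offdiag; [exact HN | exact Hij | |].
    + split; [exact (inverse_zero T HT phi Hphi) | exact (inverse_pos T HT phi Hphi)].
    + exact (inverse_unbounded T HT phi Hphi).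
  - apply VRCLF_larger_gains with (gam := gam); [|exact HN' | exact Hdiag' | exact HSG' | exact HV].
    intros i j s _. apply enlarged_ge.
Qed.
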